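(* Let $p\in\{1,2\}$, $\varepsilon\ge0$ (with $\varepsilon=0$ when $p=2$), and let $\hat\nu$ be an optimal barycenter, i.e. a minimizer of $\Psi_p$. (i) If $\tilde\nu$ is the output of the reference algorithm with reference index $1$, then $\Psi_p(\tilde\nu)\le\frac{1+\varepsilon}{\lambda_1}\Psi_p(\hat\nu)$. If instead the reference index $j$ is chosen at random with probability $\lambda_j$ (and $\tilde\nu$ is the output of the reference algorithm with reference index $j$), then $\mathbb{E}[\Psi_p(\tilde\nu)]\le2(1+\varepsilon)\Psi_p(\hat\nu)$. (ii) If $\tilde\nu$ is the output of the pairwise algorithm, then $\Psi_p(\tilde\nu)\le2(1+\varepsilon)\Psi_p(\hat\nu)$.
   Context: $\|\cdot\|$ is the Euclidean norm on $\mathbb{R}^d$. For finitely supported probability measures $\mu,\nu$ on $\mathbb{R}^d$, $\mathcal{W}_p^p(\mu,\nu)\coloneqq\min_{\pi\in\Pi(\mu,\nu)}\int\|x-y\|^p\,d\pi$, with $\Pi(\mu,\nu)$ the set of couplings. Fix $N\ge2$, $\lambda\in\Delta_N\coloneqq\{\lambda\in(0,1)^N:\sum_i\lambda_i=1\}$, and discrete probability measures $\mu^i=\sum_{l=1}^{n_i}\mu^i_l\delta(x^i_l)$, $i=1,\dots,N$, with positive weights and pairwise distinct points for each $i$. $\Psi_p(\nu)\coloneqq\sum_{i=1}^N\lambda_i\mathcal{W}_p^p(\nu,\mu^i)$. Reference algorithm with reference index $j$ (parameters $p$, $\varepsilon$): let $\pi^{jj}\coloneqq\sum_k\mu^j_k\delta(x^j_k,x^j_k)$,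 and for $i\neq j$ let $\pi^{ji}=\sum_{k,l}\pi^{ji}_{k,l}\delta(x^j_k,x^i_l)\in\Pi(\mu^j,\mu^i)$ be an optimal plan for cost $\|x-y\|^p$ (so $\pi^{jj}_{k,l}=\mu^j_k$ if $l=k$ and $0$ otherwise). For $k=1,\dots,n_j$ let $f^j_k(m)\coloneqq\sum_{i=1}^N\lambda_i\sum_{l=1}^{n_i}\frac{\pi^{ji}_{k,l}}{\mu^j_k}\|m-x^i_l\|^p$ and choose $m^j_k$ with $f^j_k(m^j_k)\le(1+\varepsilon)\min_{m\in\mathbb{R}^d}f^j_k(m)$ (for $p=2$, $m^j_k$ is the exact minimizer, the weighted mean). The output is $\tilde\nu\coloneqq\sum_{k=1}^{n_j}\mu^j_k\delta(m^j_k)$. Pairwise algorithm (parameters $p$, $\varepsilon$): for all $i$ let $\pi^{ii}\coloneqq\sum_k\mu^i_k\delta(x^i_k,x^i_k)$; for $i<j$ let $\pi^{ij}=\sum_{k,l}\pi^{ij}_{k,l}\delta(x^i_k,x^j_l)\in\Pi(\mu^i,\mu^j)$ be an optimal plan for cost $\|x-y\|^p$, and $\pi^{ji}_{l,k}\coloneqq\pi^{ij}_{k,l}$ (the transposed plan). For each $i$ and $k=1,\dots,n_i$ let $f^i_k(m)\coloneqq\sum_{j=1}^N\lambda_j\sum_{l=1}^{n_j}\frac{\pi^{ij}_{k,l}}{\mu^i_k}\|m-x^j_l\|^p$ and choose $m^i_k$ with $f^i_k(m^i_k)\le(1+\varepsilon)\min_m f^i_k(m)$ (exact weighted mean for $p=2$).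 The output is $\tilde\nu\coloneqq\sum_{i=1}^N\lambda_i\sum_{k=1}^{n_i}\mu^i_k\delta(m^i_k)$. *)

From HB Require Import structures.
From mathcomp Require Import all_boot all_order all_algebra.
From mathcomp Require Import all_classical all_reals.
Set Implicit Arguments. Unset Strict Implicit. Unset Printing Implicit Defensive.
Import Order.TTheory GRing.Theory Num.Theory.
Local Open Scope classical_set_scope.
Local Open Scope ring_scope.

Section Defs.
Variables (R : realType) (d : nat).

Definition enorm (v : 'rV[R]_d) : R := Num.sqrt (\sum_(i < d) v 0 i ^+ 2).

(* A finitely supported probability measure is represented by a finite family
   of atoms: weights [a : I -> R] at points [x : I -> 'rV_d]. *)
Definition is_prob (I : finType) (a : I -> R) : Prop :=
  (forall i, 0 <= a i) /\ \sum_i a i = 1.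

Definition coupling (I J : finType) (a : I -> R) (b : J -> R)
  (P : I -> J -> R) : Prop :=
  [/\ forall i j, 0 <= P i j,
      forall i, \sum_j P i j = a i
    & forall j, \sum_i P i j = b j].

Definition tcost (p : nat) (I J : finType) (x : I -> 'rV[R]_d) (y : J -> 'rV[R]_d)
  (P : I -> J -> R) : R :=
  \sum_i \sum_j P i j * enorm (x i - y j) ^+ p.

Definition Wpp (p : nat) (I J : finType) (a : I -> R) (x : I -> 'rV[R]_d)
  (b : J -> R) (y : J -> 'rV[R]_d) : R :=
  inf [set c | exists P, coupling a b P /\ c = tcost p x y P].

Definition optimal_plan (p : nat) (I J : finType) (a : I -> R) (x : I -> 'rV[R]_d)
  (b : J -> R) (y : J -> 'rV[R]_d) (P : I -> J -> R) : Prop :=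
  coupling a b P /\
  forall P', coupling a b P' -> tcost p x y P <= tcost p x y P'.

Definition Psi (p N : nat) (lam : 'I_N -> R) (n : 'I_N -> nat)
  (w : forall i, 'I_(n i) -> R) (x : forall i, 'I_(n i) -> 'rV[R]_d)
  (J : finType) (b : J -> R) (y : J -> 'rV[R]_d) : R :=
  \sum_(i < N) lam i * Wpp p b y (w i) (x i).

(* Reference algorithm with reference index j: P i is the plan pi^{ji},
   m k is the chosen m^j_k. *)
Definition ref_output (p N : nat) (eps : R) (lam : 'I_N -> R) (n : 'I_N -> nat)
  (w : forall i, 'I_(n i) -> R) (x : forall i, 'I_(n i) -> 'rV[R]_d)
  (j : 'I_N) (P : forall i, 'I_(n j) -> 'I_(n i) -> R)
  (m : 'I_(n j) -> 'rV[R]_d) : Prop :=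
  let f := fun (k : 'I_(n j)) (z : 'rV[R]_d) =>
    \sum_(i < N) lam i * \sum_(l < n i) (P i k l / w j k) * enorm (z - x i l) ^+ p in
  [/\ forall i, i != j -> optimal_plan p (w j) (x j) (w i) (x i) (P i),
      forall k l : 'I_(n j), P j k l = if k == l then w j k else 0
    & forall k (z : 'rV[R]_d), f k (m k) <= (1 + eps) * f k z].

(* Pairwise algorithm: Q i j is the plan pi^{ij}, m i k is m^i_k. *)
Definition pair_output (p N : nat) (eps : R) (lam : 'I_N -> R) (n : 'I_N -> nat)
  (w : forall i, 'I_(n i) -> R) (x : forall i, 'I_(n i) -> 'rV[R]_d)
  (Q : forall i j, 'I_(n i) -> 'I_(n j) -> R)
  (m : forall i, 'I_(n i) -> 'rV[R]_d) : Prop :=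
  let f := fun (i : 'I_N) (k : 'I_(n i)) (z : 'rV[R]_d) =>
    \sum_(j < N) lam j * \sum_(l < n j) (Q i j k l / w i k) * enorm (z - x j l) ^+ p in
  [/\ forall i j : 'I_N, (i < j)%N -> optimal_plan p (w i) (x i) (w j) (x j) (Q i j),
      forall (i j : 'I_N) k l, (i < j)%N -> Q j i l k = Q i j k l,
      forall (i : 'I_N) (k l : 'I_(n i)), Q i i k l = if k == l then w i k else 0
    & forall i k (z : 'rV[R]_d), f i k (m i k) <= (1 + eps) * f i k z].

(* output measure of the pairwise algorithm: atoms indexed by pairs (i, k) *)
Definition pair_weights (N : nat) (lam : 'I_N -> R) (n : 'I_N -> nat)
  (w : forall i, 'I_(n i) -> R) : {i : 'I_N & 'I_(n i)} -> R :=
  fun t => lam (tag t) * w (tag t) (tagged t).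

Definition pair_points (N : nat) (n : 'I_N -> nat)
  (m : forall i, 'I_(n i) -> 'rV[R]_d) : {i : 'I_N & 'I_(n i)} -> 'rV[R]_d :=
  fun t => m (tag t) (tagged t).

End Defs.

(* Let g_i be near-optimal plans from nu-hat to mu^i, of costs C_i, so that
   sum_i lam_i C_i is close to Psi_p(nu-hat).  Gluing g_j and g_i along nu-hat
   couples mu^j with mu^i, so the optimal plan pi^{ji} costs at most the glued plan.
   Each atom of either output eps-minimises its local objective, in particular does
   within a factor 1 + eps as well as the input atom it replaces; hence the output
   costs at most (1 + eps) times the lam-average of the costs of the plans pi^{ji}.
   For p in {1, 2} and 0 < t < 1, |a - b|^p <= |a|^p / (1 - t) + |b|^p / t, so the
   glued plan costs at most C_j / (1 - lam_j) + C_i / lam_j; taking t = lam_j gives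
   the 1 / lam_j bound.  Averaging over pairs with weights lam_i lam_j gives instead
   2 sum_i lam_i C_i: for p = 1 by the triangle inequality, for p = 2 because the
   glued points are conditionally independent given the atom of nu-hat, so the cross
   terms form a square. *)

From HB Require Import structures.
From mathcomp Require Import all_boot all_order all_algebra.
From mathcomp Require Import all_classical all_reals.
From mathcomp Require Import ring lra.
Import Order.TTheory GRing.Theory Num.Theory.
Local Open Scope classical_set_scope.
Local Open Scope ring_scope.
Set Implicit Arguments. Unset Strict Implicit.

Lemma cauchy_schwarz_sum (R : realDomainType) (I : finType) (a b : I -> R) :
  (\sum_i a i * b i) ^+ 2 <= (\sum_i a i ^+ 2) * (\sum_i b i ^+ 2).
Proof.
pose F i j := a i ^+ 2 * b j ^+ 2 - (a i * b i) * (a j * b j).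
have lagrange : \sum_i \sum_j (a i * b j - a j * b i) ^+ 2
    = 2 * ((\sum_i a i ^+ 2) * (\sum_i b i ^+ 2) - (\sum_i a i * b i) ^+ 2).
  transitivity (\sum_i \sum_j F i j + \sum_i \sum_j F j i).
    rewrite -big_split; apply: eq_bigr => i _.
    by rewrite -big_split; apply: eq_bigr => j _ /=; rewrite /F; ring.
  rewrite [X in _ + X]exchange_big -mulr2n mulr_natl expr2 !big_distrlr -sumrB /=.
  by congr (_ *+ 2); apply: eq_bigr => i _; rewrite sumrB.
have : 0 <= \sum_i \sum_j (a i * b j - a j * b i) ^+ 2.
  by do 2!(apply: sumr_ge0 => ? _); exact: sqr_ge0.
by rewrite lagrange pmulr_rge0 // subr_ge0.
Qed.

Section EuclideanNorm.
Variables (R : realType) (d : nat).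
Implicit Types (a b v : 'rV[R]_d).

Lemma enorm_ge0 v : 0 <= enorm v.
Proof. exact: sqrtr_ge0. Qed.

Lemma enorm_sqr v : enorm v ^+ 2 = \sum_i v 0 i ^+ 2.
Proof. by rewrite sqr_sqrtr // sumr_ge0 // => i _; exact: sqr_ge0. Qed.

Lemma enorm0 : enorm (0 : 'rV[R]_d) = 0.
Proof. by rewrite /enorm big1 ?sqrtr0 // => i _; rewrite mxE expr0n. Qed.

Lemma enorm_distrC a b : enorm (a - b) = enorm (b - a).
Proof.
by rewrite /enorm; congr Num.sqrt; apply: eq_bigr => i _; rewrite !mxE -sqrrN opprB.
Qed.

Lemma enorm_recenter z a b : enorm (a - b) = enorm ((z - a) - (z - b)).
Proof. by rewrite [in RHS]opprB [in RHS]addrC subrKA enorm_distrC. Qed.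

Lemma enormB_sqr a b :
  enorm (a - b) ^+ 2 = enorm a ^+ 2 + enorm b ^+ 2 - 2 * \sum_i a 0 i * b 0 i.
Proof.
rewrite !enorm_sqr mulr_sumr -sumrN -!big_split; apply: eq_bigr => i _.
by rewrite !mxE /=; ring.
Qed.

Lemma ler_enormB a b : enorm (a - b) <= enorm a + enorm b.
Proof.
have [a0 b0] := (enorm_ge0 a, enorm_ge0 b).
rewrite -(@ler_pXn2r _ 2) // ?nnegrE ?addr_ge0 ?enorm_ge0 // enormB_sqr sqrrD.
suff : - (\sum_i a 0 i * b 0 i) <= enorm a * enorm b by rewrite mulr2n; lra.
apply: le_trans (ler_norm _) _; rewrite normrN.
rewrite -(@ler_pXn2r _ 2) // ?nnegrE ?mulr_ge0 // exprMn !enorm_sqr.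
by rewrite real_normK ?num_real //; exact: cauchy_schwarz_sum.
Qed.

Lemma ler_enormB_pow p (t : R) a b : p = 1%N \/ p = 2%N -> 0 < t < 1 ->
  enorm (a - b) ^+ p <= enorm a ^+ p / (1 - t) + enorm b ^+ p / t.
Proof.
move=> [->|->] /andP[t0 t1].
  rewrite !expr1; apply: le_trans (ler_enormB a b) _.
  have [a0 b0] := (enorm_ge0 a, enorm_ge0 b).
  by apply: lerD; rewrite ler_pdivlMr ?subr_gt0 // ler_piMr // ?lerBlDr ?lerDl ltW.
rewrite !enorm_sqr !mulr_suml -big_split; apply: ler_sum => i _ /=.
rewrite !mxE -subr_ge0.
have -> : a 0 i ^+ 2 / (1 - t) + b 0 i ^+ 2 / t - (a 0 i - b 0 i) ^+ 2 =
    (t * a 0 i + (1 - t) * b 0 i) ^+ 2 / (t * (1 - t)).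
  by field; rewrite subr_eq0 (gt_eqF t1) (gt_eqF t0).
by rewrite divr_ge0 ?sqr_ge0 ?mulr_ge0 ?subr_ge0 ?ltW.
Qed.

End EuclideanNorm.

Section Couplings.
Variables (R : realType) (d p : nat) (I J : finType).
Implicit Types (a : I -> R) (b : J -> R) (x : I -> 'rV[R]_d) (y : J -> 'rV[R]_d)
  (P : I -> J -> R).

Lemma tcost_ge0 x y P : (forall i j, 0 <= P i j) -> 0 <= tcost p x y P.
Proof.
move=> P0; do 2!(apply: sumr_ge0 => ? _).
by rewrite mulr_ge0 // exprn_ge0 // enorm_ge0.
Qed.

Lemma tcost_tr x y P : tcost p y x (fun j i => P i j) = tcost p x y P.
Proof.
rewrite /tcost exchange_big; apply: eq_bigr => i _; apply: eq_bigr => j _.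
by rewrite enorm_distrC.
Qed.

Lemma coupling_tr a b P : coupling a b P -> coupling b a (fun j i => P i j).
Proof. by case. Qed.

Lemma coupling_prod a b : is_prob a -> is_prob b -> coupling a b (fun i j => a i * b j).
Proof.
move=> [a0 a1] [b0 b1]; split=> [i j|i|j]; first by rewrite mulr_ge0.
  by rewrite -mulr_sumr b1 mulr1.
by rewrite -mulr_suml a1 mul1r.
Qed.

Lemma Wpp_le_tcost a x b y P : coupling a b P -> Wpp p a x b y <= tcost p x y P.
Proof.
move=> abP; apply: ge_inf; last by exists P.
by exists 0 => _ [Q [[Q0 _ _] ->]]; exact: tcost_ge0.
Qed.

Lemma Wpp_approx a x b y (e : R) : is_prob a -> is_prob b -> 0 < e ->
  exists2 P, coupling a b P & tcost p x y P <= Wpp p a x b y + e.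
Proof.
move=> pa pb e0.
have costs_neq0 : [set c | exists P, coupling a b P /\ c = tcost p x y P] !=set0.
  by exists (tcost p x y (fun i j => a i * b j)), (fun i j => a i * b j);
    split=> //; exact: coupling_prod.
have lt_e : Wpp p a x b y < Wpp p a x b y + e by rewrite ltrDl.
have [c [P [abP ->]] /ltW] := inf_lt costs_neq0 lt_e.
by exists P.
Qed.

End Couplings.

Lemma optimal_plan_tr (R : realType) (d p : nat) (I J : finType) (a : I -> R)
    (x : I -> 'rV[R]_d) (b : J -> R) (y : J -> 'rV[R]_d) (P : I -> J -> R) :
  optimal_plan p a x b y P -> optimal_plan p b y a x (fun j i => P i j).
Proof.
case=> abP Popt; split=> [|Q /coupling_tr baQ]; first exact: coupling_tr.
by rewrite -(tcost_tr _ _ _ Q) tcost_tr; exact: Popt.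
Qed.

Section DiagonalPlan.
Variables (R : realType) (d p : nat) (I : finType) (a : I -> R) (x : I -> 'rV[R]_d)
  (P : I -> I -> R).
Hypothesis diagP : forall k l, P k l = if k == l then a k else 0.

Lemma coupling_diag : (forall k, 0 <= a k) -> coupling a a P.
Proof.
move=> a0; split=> [k l|k|l]; first by rewrite diagP; case: ifP.
  by rewrite (bigD1 k) //= diagP eqxx big1 ?addr0 // => l /negbTE; rewrite diagP eq_sym => ->.
by rewrite (bigD1 l) //= diagP eqxx big1 ?addr0 // => k /negbTE; rewrite diagP => ->.
Qed.

Lemma tcost_diag : (0 < p)%N -> tcost p x x P = 0.
Proof.
move=> p0; apply: big1 => k _; apply: big1 => l _.
rewrite diagP; case: eqP => [->|_]; last by rewrite mul0r.
by rewrite subrr enorm0 expr0n eqn0Ngt p0 mulr0.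
Qed.

Lemma optimal_plan_diag : (0 < p)%N -> (forall k, 0 <= a k) -> optimal_plan p a x a x P.
Proof.
move=> p0 a0; split=> [|Q [Q0 _ _]]; first exact: coupling_diag.
by rewrite tcost_diag //; exact: tcost_ge0.
Qed.

End DiagonalPlan.

(* Rows of a plan issued from an atom [y] of zero mass vanish, so the junk value
   [1 / 0 = 0] is harmless in [glue]. *)
Definition glue (R : realType) (K I1 I2 : finType) (c : K -> R)
    (g1 : K -> I1 -> R) (g2 : K -> I2 -> R) : I1 -> I2 -> R :=
  fun k l => \sum_y g1 y k * g2 y l / c y.

(* [c y] times the conditional mean of [xh y - x] given the atom [y]. *)
Definition drift (R : realType) (d : nat) (K I : finType) (xh : K -> 'rV[R]_d)
    (g : K -> I -> R) (x : I -> 'rV[R]_d) (y : K) (s : 'I_d) : R :=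
  \sum_k g y k * (xh y 0 s - x k 0 s).

Lemma coupling_row_eq0 (R : realType) (I J : finType) (a : I -> R) (b : J -> R)
    (P : I -> J -> R) i j :
  coupling a b P -> a i = 0 -> P i j = 0.
Proof.
by case=> P0 rowP _ ai0; apply: (@psumr_eq0P _ _ xpredT (P i)) => //; rewrite rowP.
Qed.

Section Gluing.
Variables (R : realType) (d : nat) (K I1 I2 : finType) (c : K -> R).
Variables (a1 : I1 -> R) (a2 : I2 -> R) (g1 : K -> I1 -> R) (g2 : K -> I2 -> R).
Hypotheses (cg1 : coupling c a1 g1) (cg2 : coupling c a2 g2).

Lemma glue_sumr y k : \sum_l g1 y k * g2 y l / c y = g1 y k.
Proof.
have [cy0|cy_neq0] := eqVneq (c y) 0.
  by rewrite (coupling_row_eq0 k cg1 cy0) big1 // => l _; rewrite !mul0r.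
have [_ rowg2 _] := cg2.
by rewrite -mulr_suml -mulr_sumr rowg2 -mulrA divff // mulr1.
Qed.

Lemma glue_suml y l : \sum_k g1 y k * g2 y l / c y = g2 y l.
Proof.
have [cy0|cy_neq0] := eqVneq (c y) 0.
  by rewrite (coupling_row_eq0 l cg2 cy0) big1 // => k _; rewrite mulr0 mul0r.
have [_ rowg1 _] := cg1.
by rewrite -mulr_suml -mulr_suml rowg1 mulrAC divff // mul1r.
Qed.

Lemma coupling_glue : (forall y, 0 <= c y) -> coupling a1 a2 (glue c g1 g2).
Proof.
have [[g10 _ colg1] [g20 _ colg2]] := (cg1, cg2).
move=> c0; split=> [k l|k|l].
- by apply: sumr_ge0 => y _; rewrite divr_ge0 ?mulr_ge0.
- by rewrite /glue exchange_big -colg1; apply: eq_bigr => y _; exact: glue_sumr.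
- by rewrite /glue exchange_big -colg2; apply: eq_bigr => y _; exact: glue_suml.
Qed.

Lemma sum_glue_add (A : K -> I1 -> R) (B : K -> I2 -> R) :
  \sum_y \sum_k \sum_l g1 y k * g2 y l / c y * (A y k + B y l) =
  \sum_y \sum_k g1 y k * A y k + \sum_y \sum_l g2 y l * B y l.
Proof.
rewrite -big_split; apply: eq_bigr => y _ /=.
under eq_bigr => k _ do rewrite (eq_bigr _ (fun l _ => mulrDr _ _ _)) big_split /=.
rewrite big_split /= [X in _ + X]exchange_big /=; congr (_ + _).
  by apply: eq_bigr => k _; rewrite -mulr_suml glue_sumr.
by apply: eq_bigr => l _; rewrite -mulr_suml glue_suml.
Qed.

Lemma tcost_glue p (x1 : I1 -> 'rV[R]_d) (x2 : I2 -> 'rV[R]_d) :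
  tcost p x1 x2 (glue c g1 g2) =
  \sum_y \sum_k \sum_l g1 y k * g2 y l / c y * enorm (x1 k - x2 l) ^+ p.
Proof.
rewrite /tcost /glue.
under eq_bigr do under eq_bigr do rewrite mulr_suml.
by under eq_bigr do rewrite exchange_big /=; rewrite exchange_big.
Qed.

Lemma tcost_glue_le p (xh : K -> 'rV[R]_d) (x1 : I1 -> 'rV[R]_d) (x2 : I2 -> 'rV[R]_d)
    (al be : R) :
  (forall y, 0 <= c y) ->
  (forall y k l, enorm (x1 k - x2 l) ^+ p <=
     enorm (xh y - x1 k) ^+ p * al + enorm (xh y - x2 l) ^+ p * be) ->
  tcost p x1 x2 (glue c g1 g2) <= tcost p xh x1 g1 * al + tcost p xh x2 g2 * be.
Proof.
move=> c0 dist_le; have [[g10 _ _] [g20 _ _]] := (cg1, cg2).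
rewrite tcost_glue; apply: le_trans (_ : _ <= \sum_y \sum_k \sum_l g1 y k * g2 y l / c y *
  (enorm (xh y - x1 k) ^+ p * al + enorm (xh y - x2 l) ^+ p * be)) _.
  do 3!(apply: ler_sum => ? _).
  by apply: ler_wpM2l; [rewrite divr_ge0 ?mulr_ge0 | exact: dist_le].
rewrite sum_glue_add /tcost !mulr_suml.
by apply: lerD; apply: ler_sum => y _; rewrite mulr_suml; apply: ler_sum => k _; rewrite mulrA.
Qed.

Lemma tcost_glue_le_split p (xh : K -> 'rV[R]_d) (x1 : I1 -> 'rV[R]_d) (x2 : I2 -> 'rV[R]_d)
    (t : R) :
  p = 1%N \/ p = 2%N -> 0 < t < 1 -> (forall y, 0 <= c y) ->
  tcost p x1 x2 (glue c g1 g2) <= tcost p xh x1 g1 / (1 - t) + tcost p xh x2 g2 / t.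
Proof.
move=> p12 t01 c0; apply: tcost_glue_le => // y k l.
by rewrite (enorm_recenter (xh y)); exact: ler_enormB_pow.
Qed.

Lemma tcost2_glue (xh : K -> 'rV[R]_d) (x1 : I1 -> 'rV[R]_d) (x2 : I2 -> 'rV[R]_d) :
  tcost 2 x1 x2 (glue c g1 g2) = tcost 2 xh x1 g1 + tcost 2 xh x2 g2
    - 2 * \sum_y (c y)^-1 * \sum_s drift xh g1 x1 y s * drift xh g2 x2 y s.
Proof.
have dist_sqr y k l : enorm (x1 k - x2 l) ^+ 2 =
    (enorm (xh y - x1 k) ^+ 2 + enorm (xh y - x2 l) ^+ 2)
    - 2 * \sum_s (xh y 0 s - x1 k 0 s) * (xh y 0 s - x2 l 0 s).
  rewrite (enorm_recenter (xh y)) [LHS]enormB_sqr.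
  by congr (_ - 2 * _); apply: eq_bigr => s _; rewrite !mxE.
rewrite tcost_glue.
under eq_bigr => y _ do under eq_bigr => k _ do under eq_bigr => l _ do
  rewrite (dist_sqr y k l) mulrBr.
under eq_bigr => y _ do under eq_bigr => k _ do rewrite sumrB.
under eq_bigr => y _ do rewrite sumrB.
rewrite sumrB sum_glue_add; congr (_ - _).
rewrite mulr_sumr; apply: eq_bigr => y _; rewrite /drift mulr_sumr.
transitivity (\sum_k \sum_l \sum_s 2 * ((c y)^-1 * ((g1 y k * (xh y 0 s - x1 k 0 s)) *
    (g2 y l * (xh y 0 s - x2 l 0 s))))).
  do 2!(apply: eq_bigr => ? _); rewrite !mulr_sumr; apply: eq_bigr => s _; ring.
under eq_bigr do rewrite exchange_big /=.
rewrite [LHS]exchange_big /= [RHS]mulr_sumr; apply: eq_bigr => s _.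
by rewrite big_distrlr !mulr_sumr; apply: eq_bigr => k _; rewrite !mulr_sumr.
Qed.

End Gluing.

Lemma sum_pair_sym (R : comNzRingType) (I : finType) (lam C : I -> R) :
  \sum_i lam i = 1 ->
  \sum_i \sum_j lam i * lam j * (C i + C j) = 2 * \sum_i lam i * C i.
Proof.
move=> lam1.
have half : \sum_i \sum_j lam i * C i * lam j = \sum_i lam i * C i.
  by apply: eq_bigr => i _; rewrite -mulr_sumr lam1 mulr1.
transitivity (\sum_i \sum_j lam i * C i * lam j + \sum_j \sum_i lam j * C j * lam i).
  rewrite [X in _ = _ + X]exchange_big -big_split; apply: eq_bigr => i _.
  by rewrite -big_split; apply: eq_bigr => j _ /=; ring.
by rewrite half mulr2n mulrDl mul1r.
Qed.

Section GluedFamily.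
Variables (R : realType) (d N : nat) (lam : 'I_N -> R) (n : 'I_N -> nat).
Variables (w : forall i, 'I_(n i) -> R) (x : forall i, 'I_(n i) -> 'rV[R]_d).
Variables (K : finType) (c : K -> R) (xh : K -> 'rV[R]_d) (g : forall i, K -> 'I_(n i) -> R).
Arguments w : clear implicits. Arguments x : clear implicits. Arguments g : clear implicits.
Hypotheses (lam_ge0 : forall i, 0 <= lam i) (lam_sum1 : \sum_i lam i = 1).
Hypotheses (c_ge0 : forall y, 0 <= c y) (cg : forall i, coupling c (w i) (g i)).

Lemma sum_tcost1_glue_le :
  \sum_i \sum_j lam i * lam j * tcost 1 (x i) (x j) (glue c (g i) (g j))
    <= 2 * \sum_i lam i * tcost 1 xh (x i) (g i).
Proof.
rewrite -(sum_pair_sym (fun i => tcost 1 xh (x i) (g i)) lam_sum1).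
do 2!(apply: ler_sum => ? _); apply: ler_wpM2l; first by rewrite mulr_ge0.
rewrite -[X in _ <= X + _]mulr1 -[X in _ <= _ + X]mulr1.
apply: tcost_glue_le => // y k l; rewrite !mulr1 !expr1.
by rewrite (enorm_recenter (xh y)); exact: ler_enormB.
Qed.

Lemma sum_tcost2_glue_le :
  \sum_i \sum_j lam i * lam j * tcost 2 (x i) (x j) (glue c (g i) (g j))
    <= 2 * \sum_i lam i * tcost 2 xh (x i) (g i).
Proof.
under eq_bigr => i _ do under eq_bigr => j _ do rewrite (tcost2_glue (cg i) (cg j) xh) mulrBr.
under eq_bigr => i _ do rewrite sumrB.
rewrite sumrB sum_pair_sym // lerBlDr lerDl.
(* The cross terms recombine into [\sum_y (c y)^-1 |\sum_i lam i drift_i y|^2]. *)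
pose D i y s := lam i * drift xh (g i) (x i) y s.
have -> : \sum_i \sum_j lam i * lam j * (2 * \sum_y (c y)^-1 *
      \sum_s drift xh (g i) (x i) y s * drift xh (g j) (x j) y s) =
    \sum_y \sum_s 2 * ((c y)^-1 * (\sum_i D i y s) ^+ 2).
  transitivity (\sum_i \sum_j \sum_y \sum_s 2 * ((c y)^-1 * (D i y s * D j y s))).
    do 2!(apply: eq_bigr => ? _); rewrite !mulr_sumr; apply: eq_bigr => y _.
    by rewrite !mulr_sumr; apply: eq_bigr => s _; rewrite /D; ring.
  under eq_bigr => i _ do rewrite exchange_big /=.
  rewrite exchange_big /=; apply: eq_bigr => y _.
  under eq_bigr => i _ do rewrite exchange_big /=.
  rewrite exchange_big /=; apply: eq_bigr => s _.
  by rewrite expr2 big_distrlr /= !mulr_sumr; apply: eq_bigr => i _; rewrite !mulr_sumr.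
by do 2!(apply: sumr_ge0 => ? _); apply: mulr_ge0 => //; rewrite mulr_ge0 ?invr_ge0 ?sqr_ge0.
Qed.

Lemma sum_tcost_glue_le p : p = 1%N \/ p = 2%N ->
  \sum_i \sum_j lam i * lam j * tcost p (x i) (x j) (glue c (g i) (g j))
    <= 2 * \sum_i lam i * tcost p xh (x i) (g i).
Proof. by case=> ->; [exact: sum_tcost1_glue_le | exact: sum_tcost2_glue_le]. Qed.

End GluedFamily.

Lemma ref_average_le (R : realFieldType) (I : finType) (lam C T : I -> R) (j : I) :
  (forall i, 0 <= lam i) -> \sum_i lam i = 1 -> 0 < lam j < 1 -> T j = 0 ->
  (forall i, i != j -> T i <= C j / (1 - lam j) + C i / lam j) ->
  \sum_i lam i * T i <= (\sum_i lam i * C i) / lam j.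
Proof.
move=> lam_ge0 lam_sum1 /andP[lamj_gt0 lamj_lt1] Tj0 T_le.
have others : \sum_(i | i != j) lam i = 1 - lam j.
  by rewrite -lam_sum1 [in RHS](bigD1 j) //= addrAC subrr add0r.
rewrite (bigD1 j) //= Tj0 mulr0 add0r [X in _ <= X / _](bigD1 j) //=.
apply: le_trans (_ : _ <= \sum_(i | i != j) lam i * (C j / (1 - lam j) + C i / lam j)) _.
  by apply: ler_sum => i ij; apply: ler_wpM2l => //; exact: T_le.
rewrite (eq_bigr (fun i => C j / (1 - lam j) * lam i + lam i * C i / lam j)); last first.
  by move=> i _; rewrite mulrDr mulrC mulrA.
rewrite big_split /= -mulr_sumr others -mulr_suml divfK ?subr_eq0 1?eq_sym ?lt_eqF //.
by rewrite mulrDl [lam j * C j]mulrC mulfK ?gt_eqF.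
Qed.

Definition local_cost (R : realType) (d p N : nat) (lam : 'I_N -> R) (n : 'I_N -> nat)
    (x : forall i, 'I_(n i) -> 'rV[R]_d) (I : finType) (a : I -> R)
    (P : forall i, I -> 'I_(n i) -> R) (k : I) (z : 'rV[R]_d) : R :=
  \sum_(i < N) lam i * \sum_(l < n i) (P i k l / a k) * enorm (z - x i l) ^+ p.

Section LocalCost.
Variables (R : realType) (d p N : nat) (lam : 'I_N -> R) (n : 'I_N -> nat).
Variables (x : forall i, 'I_(n i) -> 'rV[R]_d) (I : finType) (a : I -> R).
Variable (P : forall i, I -> 'I_(n i) -> R).
Arguments x : clear implicits. Arguments P : clear implicits.
Hypothesis a_gt0 : forall k, 0 < a k.

Lemma sum_local_cost (z : I -> 'rV[R]_d) :
  \sum_k a k * local_cost p lam x a P k (z k) = \sum_i lam i * tcost p z (x i) (P i).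
Proof.
rewrite /local_cost /tcost; under eq_bigr => k _ do rewrite mulr_sumr.
rewrite exchange_big; apply: eq_bigr => i _ /=; rewrite mulr_sumr.
apply: eq_bigr => k _; rewrite mulrCA !mulr_sumr; apply: eq_bigr => l _.
by rewrite (mulrA (a k)) (mulrC (a k)) divfK ?gt_eqF.
Qed.

Lemma sum_tcost_le_of_local_min (eps : R) (m z : I -> 'rV[R]_d) :
  (forall k, local_cost p lam x a P k (m k) <= (1 + eps) * local_cost p lam x a P k (z k)) ->
  \sum_i lam i * tcost p m (x i) (P i) <= (1 + eps) * \sum_i lam i * tcost p z (x i) (P i).
Proof.
move=> m_le; rewrite -!sum_local_cost mulr_sumr; apply: ler_sum => k _.
by rewrite mulrCA; apply: ler_wpM2l; [exact: ltW | exact: m_le].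
Qed.

End LocalCost.

Lemma sum_sigT (R : nmodType) (I : finType) (J : I -> finType) (F : forall i, J i -> R) :
  \sum_(t : {i : I & J i}) F (tag t) (tagged t) = \sum_i \sum_j F i j.
Proof. by rewrite (sig_big_dep xpredT (fun i => xpredT) F). Qed.

Definition pair_plan (R : realType) (N : nat) (lam : 'I_N -> R) (n : 'I_N -> nat)
    (Q : forall i j, 'I_(n i) -> 'I_(n j) -> R) (j : 'I_N) :
    {i : 'I_N & 'I_(n i)} -> 'I_(n j) -> R :=
  fun t l => lam (tag t) * Q (tag t) j (tagged t) l.

Arguments pair_plan [R N] lam [n] Q j.

Section Algorithms.
Variables (R : realType) (d p N : nat) (eps : R) (lam : 'I_N -> R) (n : 'I_N -> nat).
Variables (w : forall i, 'I_(n i) -> R) (x : forall i, 'I_(n i) -> 'rV[R]_d).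
Arguments w : clear implicits. Arguments x : clear implicits.
Hypotheses (p_gt0 : (0 < p)%N) (w_gt0 : forall i k, 0 < w i k).
Arguments w_gt0 : clear implicits.
Hypotheses (lam_ge0 : forall i, 0 <= lam i) (lam_sum1 : \sum_i lam i = 1).

Lemma ref_output_optimal j P m : ref_output p eps lam w x P m ->
  forall i, optimal_plan p (w j) (x j) (w i) (x i) (P i).
Proof.
case=> opt diag _ i; have [->|] := eqVneq i j; last exact: opt.
by apply: optimal_plan_diag => // k; exact: ltW.
Qed.

Lemma ref_output_Psi_le j P m : ref_output p eps lam w x P m ->
  Psi p lam w x (w j) m <= (1 + eps) * \sum_i lam i * tcost p (x j) (x i) (P i).
Proof.
move=> out; have opt := ref_output_optimal out; case: out => _ _ m_min.
apply: le_trans (_ : _ <= \sum_i lam i * tcost p m (x i) (P i)) _.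
  by apply: ler_sum => i _; apply: ler_wpM2l => //; apply: Wpp_le_tcost; case: (opt i).
by apply: (sum_tcost_le_of_local_min (w_gt0 j)) => k; exact: m_min.
Qed.

Lemma ref_outputs_Psi_le P m : (forall j, ref_output p eps lam w x (P j) (m j)) ->
  \sum_j lam j * Psi p lam w x (w j) (m j)
    <= (1 + eps) * \sum_j \sum_i lam j * lam i * tcost p (x j) (x i) (P j i).
Proof.
move=> out; rewrite mulr_sumr; apply: ler_sum => j _.
under [X in _ <= _ * X]eq_bigr do rewrite -mulrA; rewrite -mulr_sumr mulrCA.
by apply: ler_wpM2l => //; exact: ref_output_Psi_le.
Qed.

Lemma pair_output_optimal Q m : pair_output p eps lam w x Q m ->
  forall i j, optimal_plan p (w i) (x i) (w j) (x j) (Q i j).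
Proof.
case=> opt tr diag _ i j; case: (ltngtP i j) => [ij|ji|/val_inj ->]; first exact: opt.
  have -> : Q i j = fun k l => Q j i l k.
    by apply/funext => k; apply/funext => l; rewrite tr.
  exact/optimal_plan_tr/opt.
by apply: optimal_plan_diag => // k; exact: ltW.
Qed.

Lemma coupling_pair_plan Q : (forall i j, coupling (w i) (w j) (Q i j)) ->
  forall j, coupling (pair_weights lam w) (w j) (pair_plan lam Q j).
Proof.
move=> cQ j; split=> [t l|t|l].
- by rewrite mulr_ge0 //; case: (cQ (tag t) j).
- by rewrite -mulr_sumr; case: (cQ (tag t) j) => _ ->.
rewrite (sum_sigT (fun i k => lam i * Q i j k l)) -[RHS]mul1r -lam_sum1 mulr_suml.
by apply: eq_bigr => i _; rewrite -mulr_sumr; case: (cQ i j) => _ _ ->.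
Qed.

Lemma tcost_pair_plan Q m j :
  tcost p (pair_points m) (x j) (pair_plan lam Q j) =
  \sum_i lam i * tcost p (m i) (x j) (Q i j).
Proof.
rewrite /tcost (sum_sigT (fun i k => \sum_l lam i * Q i j k l * enorm (m i k - x j l) ^+ p)).
apply: eq_bigr => i _; rewrite mulr_sumr; apply: eq_bigr => k _; rewrite mulr_sumr.
by apply: eq_bigr => l _; rewrite mulrA.
Qed.

Lemma pair_output_Psi_le Q m : pair_output p eps lam w x Q m ->
  Psi p lam w x (pair_weights lam w) (pair_points m)
    <= (1 + eps) * \sum_i \sum_j lam i * lam j * tcost p (x i) (x j) (Q i j).
Proof.
move=> out; have opt := pair_output_optimal out; case: out => _ _ _ m_min.
have cQ i j : coupling (w i) (w j) (Q i j) by case: (opt i j).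
apply: le_trans (_ : _ <= \sum_j lam j * \sum_i lam i * tcost p (m i) (x j) (Q i j)) _.
  apply: ler_sum => j _; apply: ler_wpM2l => //; rewrite -tcost_pair_plan.
  exact/Wpp_le_tcost/coupling_pair_plan.
under eq_bigr do rewrite mulr_sumr; rewrite exchange_big mulr_sumr; apply: ler_sum => i _.
under eq_bigr do rewrite mulrCA; under [X in _ <= _ * X]eq_bigr do rewrite -mulrA.
rewrite -!mulr_sumr mulrCA.
apply: ler_wpM2l => //; apply: (sum_tcost_le_of_local_min (w_gt0 i)) => k; exact: m_min.
Qed.

End Algorithms.

Section BarycenterComparison.
Variables (R : realType) (d p N : nat) (lam : 'I_N -> R) (n : 'I_N -> nat).
Variables (w : forall i, 'I_(n i) -> R) (x : forall i, 'I_(n i) -> 'rV[R]_d).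
Variables (K : finType) (c : K -> R) (xh : K -> 'rV[R]_d).
Arguments w : clear implicits. Arguments x : clear implicits.
Hypotheses (lam_ge0 : forall i, 0 <= lam i) (lam_sum1 : \sum_i lam i = 1).
Hypotheses (p12 : p = 1%N \/ p = 2%N) (c_ge0 : forall y, 0 <= c y).

Lemma ref_plans_le (g : forall i, K -> 'I_(n i) -> R) j
    (P : forall i, 'I_(n j) -> 'I_(n i) -> R) :
  (forall i, coupling c (w i) (g i)) -> 0 < lam j < 1 ->
  (forall i, optimal_plan p (w j) (x j) (w i) (x i) (P i)) ->
  tcost p (x j) (x j) (P j) = 0 ->
  \sum_i lam i * tcost p (x j) (x i) (P i) <= (\sum_i lam i * tcost p xh (x i) (g i)) / lam j.
Proof.
move=> cg lamj opt Pj0; apply: ref_average_le => // i _.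
have [_ Popt] := opt i; apply: le_trans (Popt _ (coupling_glue (cg j) (cg i) c_ge0)) _.
exact: tcost_glue_le_split.
Qed.

Lemma pair_plans_le (g : forall i, K -> 'I_(n i) -> R)
    (Q : forall i j, 'I_(n i) -> 'I_(n j) -> R) :
  (forall i, coupling c (w i) (g i)) ->
  (forall i j, optimal_plan p (w i) (x i) (w j) (x j) (Q i j)) ->
  \sum_i \sum_j lam i * lam j * tcost p (x i) (x j) (Q i j)
    <= 2 * \sum_i lam i * tcost p xh (x i) (g i).
Proof.
move=> cg opt; apply: le_trans (sum_tcost_glue_le x xh lam_ge0 lam_sum1 c_ge0 cg p12).
apply: ler_sum => i _; apply: ler_sum => j _; apply: ler_wpM2l; first by rewrite mulr_ge0.
by case: (opt i j) => _; apply; exact: coupling_glue.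
Qed.

End BarycenterComparison.

Lemma le_Psi_of_couplings (R : realType) (d p N : nat) (lam : 'I_N -> R) (n : 'I_N -> nat)
    (w : forall i, 'I_(n i) -> R) (x : forall i, 'I_(n i) -> 'rV[R]_d)
    (K : finType) (c : K -> R) (xh : K -> 'rV[R]_d) (A C : R) :
  (forall i, 0 <= lam i) -> \sum_i lam i = 1 -> (forall i, is_prob (w i)) -> is_prob c ->
  0 < C ->
  (forall g : forall i, K -> 'I_(n i) -> R, (forall i, coupling c (w i) (g i)) ->
     A <= C * \sum_i lam i * tcost p xh (x i) (g i)) ->
  A <= C * Psi p lam w x c xh.
Proof.
move=> lam_ge0 lam_sum1 w_prob c_prob C_gt0 A_le; apply/ler_addgt0Pr => e e_gt0.
have near i : {P | coupling c (w i) P & tcost p xh (x i) P <= Wpp p c xh (w i) (x i) + e / C}.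
  by apply/cid2/Wpp_approx; rewrite ?divr_gt0.
have sum_le : \sum_i lam i * tcost p xh (x i) (s2val (near i)) <= Psi p lam w x c xh + e / C.
  rewrite /Psi -[X in _ + X]mul1r -lam_sum1 mulr_suml -big_split; apply: ler_sum => i _ /=.
  by rewrite -mulrDr; apply: ler_wpM2l => //; exact: s2valP' (near i).
apply: le_trans (A_le _ (fun i => s2valP (near i))) _.
apply: le_trans (ler_wpM2l (ltW C_gt0) sum_le) _.
by rewrite mulrDr mulrCA divff ?gt_eqF // mulr1.
Qed.

Unset Implicit Arguments. Set Strict Implicit.

Theorem corollary4p5 (R : realType) (d N : nat) (HN : (2 <= N)%N)
  (lam : 'I_N -> R) (Hlam : forall i, 0 < lam i < 1) (Hlam1 : \sum_(i < N) lam i = 1)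
  (n : 'I_N -> nat) (w : forall i, 'I_(n i) -> R)
  (x : forall i, 'I_(n i) -> 'rV[R]_d)
  (Hwpos : forall i k, 0 < w i k) (Hw1 : forall i, \sum_(k < n i) w i k = 1)
  (Hxinj : forall i, injective (x i))
  (p : nat) (Hp : p = 1%N \/ p = 2%N) (eps : R) (Heps : 0 <= eps)
  (Hp2 : p = 2%N -> eps = 0)
  (nh : nat) (wh : 'I_nh -> R) (xh : 'I_nh -> 'rV[R]_d) (Hhprob : is_prob wh)
  (Hhopt : forall (n' : nat) (w' : 'I_n' -> R) (x' : 'I_n' -> 'rV[R]_d),
     is_prob w' -> Psi p lam w x wh xh <= Psi p lam w x w' x') :
  (forall (j1 : 'I_N), nat_of_ord j1 = 0%N ->
   forall (P : forall i, 'I_(n j1) -> 'I_(n i) -> R) (m : 'I_(n j1) -> 'rV[R]_d),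
     ref_output p eps lam w x P m ->
     Psi p lam w x (w j1) m <= (1 + eps) / lam j1 * Psi p lam w x wh xh)
  /\
  (forall (P : forall j i, 'I_(n j) -> 'I_(n i) -> R)
          (m : forall j, 'I_(n j) -> 'rV[R]_d),
     (forall j, ref_output p eps lam w x (P j) (m j)) ->
     \sum_(j < N) lam j * Psi p lam w x (w j) (m j)
       <= 2 * (1 + eps) * Psi p lam w x wh xh)
  /\
  (forall (Q : forall i j, 'I_(n i) -> 'I_(n j) -> R)
          (m : forall i, 'I_(n i) -> 'rV[R]_d),
     pair_output p eps lam w x Q m ->
     Psi p lam w x (pair_weights lam w) (pair_points m)
       <= 2 * (1 + eps) * Psi p lam w x wh xh).
Proof.
have lam_ge0 i : 0 <= lam i by case/andP: (Hlam i) => /ltW.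
have w_prob i : is_prob (w i) by split=> // k; exact: ltW.
have wh_ge0 : forall y, 0 <= wh y by case: Hhprob.
have p_gt0 : (0 < p)%N by case: Hp => ->.
have eps1_gt0 : 0 < 1 + eps by rewrite ltr_pwDl.
split; [|split].
- move=> j _ P m out; have lamj_gt0 : 0 < lam j by case/andP: (Hlam j).
  apply: le_Psi_of_couplings => //; first by rewrite divr_gt0.
  move=> g cg; apply: le_trans (ref_output_Psi_le p_gt0 Hwpos lam_ge0 out) _.
  rewrite -mulrA; apply: ler_wpM2l; first exact: ltW.
  rewrite mulrC; apply: ref_plans_le => //; first exact: ref_output_optimal out.
  by case: out => _ diag _; exact: tcost_diag.
- move=> P m out; apply: le_Psi_of_couplings => //; first by rewrite mulr_gt0.
  move=> g cg; apply: le_trans (ref_outputs_Psi_le p_gt0 Hwpos lam_ge0 out) _.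
  rewrite [2 * _]mulrC -mulrA; apply: ler_wpM2l; first exact: ltW.
  by apply: pair_plans_le => // j; exact: ref_output_optimal.
- move=> Q m out; apply: le_Psi_of_couplings => //; first by rewrite mulr_gt0.
  move=> g cg; apply: le_trans (pair_output_Psi_le p_gt0 Hwpos lam_ge0 Hlam1 out) _.
  rewrite [2 * _]mulrC -mulrA; apply: ler_wpM2l; first exact: ltW.
  by apply: pair_plans_le => //; exact: (pair_output_optimal p_gt0 Hwpos out).
Qed.
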